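(* Let $L$ be a precompact Hausdorff co-Heyting algebra, identified with its image in $\widehat L$. Then: (1) $L$ and $\widehat L$ have the same completely meet irreducible elements; (2) the maps $x\mapsto x^{\vee}=\bigwedge\{y\in L: y\not\le x\}$ and $x\mapsto x^{\wedge}=\bigvee\{y\in L: x\not\le y\}$ are well defined and are mutually inverse, order preserving bijections between $\mathcal I^{!\wedge}(L)$ and $\mathcal I^{!\vee}(L)$ (with $x\mapsto x^\vee$ going from $\mathcal I^{!\wedge}(L)$ to $\mathcal I^{!\vee}(L)$ and $x\mapsto x^\wedge$ going back); (3) for every $x\in\mathcal I^{!\wedge}(L)$, the cofoundation rank of $x$ in $\mathcal I^{!\wedge}(L)$ is finite; (4) $\mathcal I^{!\wedge}(L)$ satisfies the ascending chain condition; (5) every $a\in L$ is the complete meet of $\{x\in\mathcal I^{!\wedge}(L): a\le x\}$.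
   Context: A co-Heyting algebra is a bounded distributive lattice $(L,0,1,\vee,\wedge)$ such that $a-b=\min\{c\in L: a\le b\vee c\}$ exists for all $a,b$. For an ideal $I$, $L/I$ is the quotient by $a\equiv_I b\iff(a-b)\vee(b-a)\in I$. $\operatorname{Spec}L$ is the set of prime filters ordered by inclusion; height = foundation rank there; $\operatorname{codim}_La=\min\{\operatorname{height}\mathfrak p: a\in\mathfrak p\}$ ($+\infty$ if none); $dL=\{a:\operatorname{codim}_La\ge d\}$ is an ideal. $L$ is Hausdorff if every nonzero element has finite codimension; precompact if $L/dL$ is finite for every positive integer $d$. $\widehat L$ is the projective limit of the quotients $L/dL$ under the canonical surjections $L/(d+1)L\to L/dL$, with $L$ embedded diagonally. $x\ne0$ is completely join irreducible if $x\le\bigvee A$ implies $x\le a$ for some $a\in A$; $x\ne1$ is completely meet irreducible if $\bigwedge A\le x$ implies $a\le x$ for some $a\in A$. $\mathcal I^{!\vee}(L)$, $\mathcal I^{!\wedge}(L)$ denote the sets of completely join, resp. meet, irreducible elements. Cofoundation rank in an ordered set is the foundation rank for the reverse order. *)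

From mathcomp Require Import all_boot all_order.
Set Implicit Arguments. Unset Strict Implicit. Unset Printing Implicit Defensive.
Import Order.Theory.
Local Open Scope order_scope.

(* D : the carrier predicate (elements of the structure), le : its order.       *)

Definition is_lb {T} (le : T -> T -> Prop) (A : T -> Prop) (m : T) :=
  forall a, A a -> le m a.
Definition is_ub {T} (le : T -> T -> Prop) (A : T -> Prop) (m : T) :=
  forall a, A a -> le a m.

Definition is_inf {T} (le : T -> T -> Prop) (D : T -> Prop) (A : T -> Prop) (m : T) :=
  D m /\ is_lb le A m /\ forall m', D m' -> is_lb le A m' -> le m' m.
Definition is_sup {T} (le : T -> T -> Prop) (D : T -> Prop) (A : T -> Prop) (m : T) :=
  D m /\ is_ub le A m /\ forall m', D m' -> is_ub le A m' -> le m m'.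

Definition cmi_gen {T} (le : T -> T -> Prop) (D : T -> Prop) (top : T) (x : T) :=
  D x /\ ~ le top x /\
  forall (A : T -> Prop) m, (forall a, A a -> D a) -> is_inf le D A m -> le m x ->
    exists a, A a /\ le a x.
Definition cji_gen {T} (le : T -> T -> Prop) (D : T -> Prop) (bot : T) (x : T) :=
  D x /\ ~ le x bot /\
  forall (A : T -> Prop) m, (forall a, A a -> D a) -> is_sup le D A m -> le x m ->
    exists a, A a /\ le x a.

(* For finite n this says exactly "(foundation) rank of x w.r.t. lt is >= n"
   (elements outside the well-founded part have infinite rank). *)
Fixpoint rank_ge {T} (lt : T -> T -> Prop) (x : T) (n : nat) : Prop :=
  match n with
  | 0 => True
  | S m => exists y, lt y x /\ rank_ge lt y m
  end.
Definition rank_finite {T} (lt : T -> T -> Prop) (x : T) := exists n, ~ rank_ge lt x n.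

Section CoHeyting.
Context {disp : Order.disp_t} {L : tbDistrLatticeType disp}.

Definition is_coHeyting_diff (sub : L -> L -> L) :=
  forall a b, a <= b `|` sub a b /\ forall c, a <= b `|` c -> sub a b <= c.

Definition Lle (a b : L) : Prop := a <= b.
Definition Lall (_ : L) : Prop := True.
Definition cmiL (x : L) := cmi_gen Lle Lall \top x.
Definition cjiL (x : L) := cji_gen Lle Lall \bot x.

Definition congr_mod (sub : L -> L -> L) (I : L -> Prop) (a b : L) :=
  I (sub a b `|` sub b a).

Definition finite_quotient (sub : L -> L -> L) (I : L -> Prop) :=
  exists s : seq L, forall a, exists2 b, b \in s & congr_mod sub I a b.

Definition prime_filter (p : L -> Prop) :=
  p \top /\ ~ p \bot /\ (forall a b, a <= b -> p a -> p b) /\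
  (forall a b, p a -> p b -> p (a `&` b)) /\
  (forall a b, p (a `|` b) -> p a \/ p b).

Definition spec_lt (q p : L -> Prop) :=
  prime_filter q /\ (forall a, q a -> p a) /\ exists a, p a /\ ~ q a.

Definition height_ge (p : L -> Prop) (n : nat) := rank_ge spec_lt p n.

(* codim_L a >= d  (min over prime filters containing a; +oo if none) *)
Definition codim_ge (a : L) (d : nat) :=
  forall p, prime_filter p -> p a -> height_ge p d.

Definition dL (d : nat) : L -> Prop := fun a => codim_ge a d.

Definition codim_finite (a : L) :=
  exists p, prime_filter p /\ p a /\ rank_finite spec_lt p.

End CoHeyting.

Definition hausdorff {disp : Order.disp_t} (L : tbDistrLatticeType disp) :=
  forall a : L, a <> \bot -> codim_finite a.

Definition precompact {disp : Order.disp_t} {L : tbDistrLatticeType disp}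
  (sub : L -> L -> L) :=
  forall d, 0 < d -> finite_quotient sub (dL d).

(* An element of hat L is represented by a sequence of representatives x d
   (only the d >= 1 components matter) with x (d+1) = x d in L/dL.
   Equality / order are those of the projective limit of the lattices L/dL:
   [a] <= [b] in L/dL iff [a /\ b] = [a]. *)
Section Completion.
Context {disp : Order.disp_t} {L : tbDistrLatticeType disp} (sub : L -> L -> L).

Definition hat_elem (x : nat -> L) :=
  forall d, 0 < d -> congr_mod sub (dL d) (x d.+1) (x d).

Definition hat_le (x y : nat -> L) :=
  forall d, 0 < d -> congr_mod sub (dL d) (x d `&` y d) (x d).

Definition hat_eq (x y : nat -> L) := hat_le x y /\ hat_le y x.

Definition hat_top : nat -> L := fun _ => \top.

Definition hat_of (a : L) : nat -> L := fun _ => a.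

Definition cmi_hat (x : nat -> L) := cmi_gen hat_le hat_elem hat_top x.

End Completion.

(* A splitting pair (x, y) cuts L into the ideal of x and the filter of y.  The x occurring
   in splitting pairs are exactly the completely meet irreducible elements, the y the
   completely join irreducible ones, and pairing them gives (2).  Splitting pairs come from
   prime filters q avoiding an ideal dL: as L/dL is finite, dL has a largest element M, and
   with representatives f_i of the classes, the complement of q lies below the join of the
   f_i outside q and M, while q is principal.  The complement of the ideal of a completely
   meet irreducible x is such a filter because, L being Hausdorff, the ideals dL meet in 0.
   If m is not below a, a prime filter of finite height separates them, whence (5); a chain
   of irreducibles above x gives a chain of prime filters below the complement of the ideal
   of x, whose height is finite: (3) and (4).  For (1), an element of the completion is the
   meet of the elements x_d `|` M_d of L above it. *)

From mathcomp Require Import all_boot all_order.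
From mathcomp Require Import boolp classical_sets.
Import Order.Theory.
Local Open Scope order_scope.

Lemma rank_ge_le {T} {lt : T -> T -> Prop} {m n x} :
  (m <= n)%N -> rank_ge lt x n -> rank_ge lt x m.
Proof.
elim: n m x => [|n IH] [|m] x //= mn [y [yx ry]].
by exists y; split => //; apply: IH.
Qed.

Lemma rank_ge_chain {T} (lt : T -> T -> Prop) (u : nat -> T) :
  (forall N, exists n, lt (u n) (u N)) -> forall k N, rank_ge lt (u N) k.
Proof.
move=> unb; elim=> [//|k IH] N.
by have [n lt_n] := unb N; exists (u n); split.
Qed.

Lemma ex_minimal_nat (P : nat -> Prop) :
  (exists n, P n) -> exists n, P n /\ forall m, P m -> (n <= m)%N.
Proof.
move=> [n Pn].
have exb : exists n, `[< P n >] by exists n; apply/asboolP.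
case: (ex_minnP exb) => k /asboolP Pk mink.
by exists k; split => // m /asboolP /mink.
Qed.

Section PrimeFilters.
Context {disp : Order.disp_t} {L : tbDistrLatticeType disp}.
Implicit Types (a b c m x y z : L) (p q r : L -> Prop).

Lemma pf_top {p} : prime_filter p -> p \top. Proof. by case. Qed.
Lemma pf_bot {p} : prime_filter p -> ~ p \bot. Proof. by case=> _ []. Qed.
Lemma pf_up {p a b} : prime_filter p -> a <= b -> p a -> p b.
Proof. by case=> _ [_ [up _]]; apply: up. Qed.
Lemma pf_meet {p a b} : prime_filter p -> p a -> p b -> p (a `&` b).
Proof. by case=> _ [_ [_ [meet _]]]; apply: meet. Qed.
Lemma pf_join {p a b} : prime_filter p -> p (a `|` b) -> p a \/ p b.
Proof. by case=> _ [_ [_ [_ join]]]; apply: join. Qed.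

Lemma prime_filter_notle x : ~ \top <= x ->
  (forall a b, a `&` b <= x -> a <= x \/ b <= x) -> prime_filter (fun z => ~ z <= x).
Proof.
move=> ntop meet_prime; do ![split] => //.
- by move=> a b ab nax bx; apply: nax; apply: le_trans bx.
- by move=> a b nax nbx /meet_prime [].
- move=> a b nabx; apply: contrapT => /not_orP [/contrapT ax /contrapT bx].
  by apply: nabx; rewrite leUx ax bx.
Qed.

Lemma prime_filter_ge y : ~ y <= \bot ->
  (forall a b, y <= a `|` b -> y <= a \/ y <= b) -> prime_filter (fun z => y <= z).
Proof.
move=> nbot join_prime; do ![split] => //.
- by move=> a b ab ya; apply: le_trans ab.
- by move=> a b ya yb; rewrite lexI ya yb.
Qed.

Lemma height_ge_sub {p r n} : (forall a, p a -> r a) -> height_ge p n -> height_ge r n.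
Proof.
case: n => [//|n] pr [q [[hq [qp [a [pa nqa]]]] rq]].
exists q; split => //; split => //; split=> [b /qp /pr //|].
by exists a; split => //; apply: pr.
Qed.

Definition filter_avoiding (J G : L -> Prop) :=
  (forall a b, a <= b -> G a -> G b) /\ (forall a b, G a -> G b -> G (a `&` b)) /\
  (forall z, J z -> ~ G z).

Lemma filter_avoiding_adjoin (J G : L -> Prop) c :
  (forall a b, a <= b -> J b -> J a) -> filter_avoiding J G ->
  (forall g, G g -> ~ J (g `&` c)) ->
  filter_avoiding J (fun z => exists g, G g /\ g `&` c <= z).
Proof.
move=> Jdown [_ [Gmeet _]] GcJ; split; [|split].
- by move=> a b ab [g [Gg gca]]; exists g; split => //; apply: le_trans ab.
- move=> a b [g [Gg gca]] [h [Gh hcb]]; exists (g `&` h); split; first exact: Gmeet.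
  rewrite lexI (le_trans _ gca) ?(le_trans _ hcb) //.
    by rewrite leI2 ?leIr.
  by rewrite leI2 ?leIl.
- by move=> z Jz [g [Gg gcz]]; apply: (GcJ g Gg); apply: Jdown Jz.
Qed.

(* Zorn's lemma, applied to the sets X such that X together with the principal
   filter of m is a filter avoiding J: the empty chain is then harmless. *)
Lemma prime_filter_separation (J : L -> Prop) m :
  J \bot -> (forall a b, a <= b -> J b -> J a) -> (forall a b, J a -> J b -> J (a `|` b)) ->
  ~ J m -> exists r, prime_filter r /\ r m /\ forall z, J z -> ~ r z.
Proof.
move=> J0 Jdown Jjoin nJm.
pose ext (X : L -> Prop) z := m <= z \/ X z.
have [A [AF Amax]] : exists A, filter_avoiding J (ext A) /\
    forall B, (A `<` B)%classic -> ~ filter_avoiding J (ext B).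
  apply: Zorn_bigcup => F FP Ftot; split; [|split].
  - move=> a b ab [ma|[X FX Xa]]; first by left; apply: le_trans ab.
    by case: ((FP X FX).1 a b ab (or_intror Xa)) => [mb|Xb]; [left|right; exists X].
  - have ext_meet X a b : F X -> ext X a -> ext X b -> ext (\bigcup_(Y in F) Y)%classic (a `&` b).
      by move=> FX /(FP X FX).2.1 Xab /Xab [mab|Xab']; [left|right; exists X].
    move=> a b [ma|[X FX Xa]] [mb|[Y FY Yb]].
    + by left; rewrite lexI ma mb.
    + by apply: (ext_meet Y) => //; [left|right].
    + by apply: (ext_meet X) => //; [right|left].
    + have [XY|YX] := Ftot X Y FX FY.
        by apply: (ext_meet Y) => //; right => //; apply: XY.
      by apply: (ext_meet X) => //; right => //; apply: YX.
  - move=> z Jz [mz|[X FX Xz]]; first by apply: nJm; apply: Jdown Jz.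
    exact: (FP X FX).2.2 z Jz (or_intror Xz).
have [_ [Ameet AJ]] := AF.
have sep c : ~ ext A c -> exists g, ext A g /\ J (g `&` c).
  move=> nAc; apply: contrapT => nsep.
  pose Ac z := exists g, ext A g /\ g `&` c <= z.
  have AcF : filter_avoiding J Ac.
    apply: filter_avoiding_adjoin AF _ => // g Ag Jgc.
    by apply: nsep; exists g.
  have extAc : ext Ac = Ac.
    apply/funext => z; apply/propext; split=> [[mz|//]|]; last by right.
    by exists m; split; [left|apply: le_trans (leIl _ _) mz].
  apply: (Amax Ac); last by rewrite extAc.
  split; first by move=> z Az; exists z; split; [right|apply: leIl].
  move=> AcA; apply: nAc; right; apply: AcA.
  by exists m; split; [left|apply: leIr].
exists (ext A); split; last by split=> [|z Jz]; [left|apply: AJ].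
split; first by left; apply: lex1.
split; first exact: AJ.
split; first exact: AF.1.
split; first exact: Ameet.
move=> a b Aab; apply: contrapT => /not_orP [/sep [g [Ag Jga]] /sep [h [Ah Jhb]]].
apply: (AJ (g `&` h `&` (a `|` b))); last exact: Ameet (Ameet _ _ Ag Ah) Aab.
apply: Jdown (Jjoin _ _ Jga Jhb); rewrite meetUr leU2 // leI2 //.
  exact: leIl.
exact: leIr.
Qed.

Definition height_eq p n := height_ge p n /\ ~ height_ge p n.+1.

Lemma height_eq_exists {p n} : ~ height_ge p n -> exists2 h, (h < n)%N & height_eq p h.
Proof.
elim: n => [|n IH] nhn; first by case: nhn.
have [hn|nhn'] := pselect (height_ge p n); first by exists n.
by have [h hn ph] := IH nhn'; exists h => //; apply: ltnW.
Qed.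

Lemma height_eq_descend {r h n} : prime_filter r -> height_eq r h -> (n <= h)%N ->
  exists q, prime_filter q /\ (forall a, q a -> r a) /\ height_eq q n.
Proof.
elim: h r => [|h IH] r hr [rh nrh]; first by rewrite leqn0 => /eqP ->; exists r.
rewrite leq_eqVlt ltnS => /orP [/eqP ->|nh]; first by exists r.
case: rh => t [tr th].
have nth : ~ height_ge t h.+1 by move=> th'; apply: nrh; exists t.
have [q [hq [qt qn]]] := IH t tr.1 (conj th nth) nh.
by exists q; split => //; split => // a /qt /tr.2.1.
Qed.

Lemma dL_down {d a b} : a <= b -> dL d b -> dL d a.
Proof. by move=> ab Ib p hp pa; apply: Ib => //; apply: pf_up ab pa. Qed.

Lemma dL_join {d a b} : dL d a -> dL d b -> dL d (a `|` b).
Proof. by move=> Ia Ib p hp /(pf_join hp) [pa|pb]; [apply: Ia|apply: Ib]. Qed.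

Lemma dL_bot d : dL d (\bot : L).
Proof. by move=> p hp /(pf_bot hp). Qed.

Lemma dL_antitone {d e a} : (d <= e)%N -> dL e a -> dL d a.
Proof. by move=> de Ia p hp pa; apply: rank_ge_le de _; apply: Ia. Qed.

Lemma pf_dL_disjoint {p d c} : prime_filter p -> ~ height_ge p d -> dL d c -> ~ p c.
Proof. by move=> hp nh Ic pc; apply/nh/Ic. Qed.

End PrimeFilters.

Section Irreducibles.
Context {disp : Order.disp_t} {L : tbDistrLatticeType disp}.
Implicit Types (a b x y z : L).

Definition splitting x y := forall z, y <= z <-> ~ z <= x.

Lemma splitting_cmi {x y} : splitting x y -> cmiL x.
Proof.
move=> xy; split=> //; split; first exact/(xy _).1/lex1.
move=> A m _ [_ [_ glb]] mx; apply: contrapT => nAx.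
have yA a : A a -> y <= a by move=> Aa; apply/xy => ax; apply: nAx; exists a.
by apply: (xy x).1 (le_refl x); apply: le_trans mx; apply: glb.
Qed.

Lemma splitting_cji {x y} : splitting x y -> cjiL y.
Proof.
move=> xy; split=> //; split; first by move=> y0; apply: (xy \bot).1 y0 (le0x x).
move=> A m _ [_ [_ lub]] ym; apply: contrapT => nyA.
have Ax a : A a -> a <= x.
  by move=> Aa; apply: contrapT => /(xy a).2 ya; apply: nyA; exists a.
by apply: (xy x).1 (le_refl x); apply: le_trans ym _; apply: lub.
Qed.

Lemma splitting_uniql {x x' y} : splitting x y -> splitting x' y -> x = x'.
Proof.
move=> xy x'y; apply/le_anti/andP; split; apply: contrapT.
  by move/(x'y x).2/(xy x).1; apply.
by move/(xy x').2/(x'y x').1; apply.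
Qed.

Lemma splitting_uniqr {x y y'} : splitting x y -> splitting x y' -> y = y'.
Proof.
move=> xy xy'; apply/le_anti/andP; split.
  by apply/(xy y').2/(xy' y').1.
by apply/(xy' y).2/(xy y).1.
Qed.

Lemma cmi_prime {x} : cmiL x -> prime_filter (fun z => ~ z <= x).
Proof.
case=> _ [ntop cmix]; apply: prime_filter_notle => // a b abx.
have inf_ab : is_inf Lle Lall (fun c => c = a \/ c = b) (a `&` b).
  split=> //; split=> [c [->|->]|m _ lb]; rewrite /Lle ?leIl ?leIr //.
  by rewrite lexI (lb a (or_introl erefl)) (lb b (or_intror erefl)).
by have [c [[->|->] cx]] := cmix _ _ (fun _ _ => I) inf_ab abx; [left|right].
Qed.

Lemma cji_prime {y} : cjiL y -> prime_filter (fun z => y <= z).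
Proof.
case=> _ [nbot cjiy]; apply: prime_filter_ge => // a b yab.
have sup_ab : is_sup Lle Lall (fun c => c = a \/ c = b) (a `|` b).
  split=> //; split=> [c [->|->]|m _ ub]; rewrite /Lle ?leUl ?leUr //.
  by rewrite leUx (ub a (or_introl erefl)) (ub b (or_intror erefl)).
by have [c [[->|->] yc]] := cjiy _ _ (fun _ _ => I) sup_ab yab; [left|right].
Qed.

Lemma splitting_inf {x y} : splitting x y -> is_inf Lle Lall (fun z => ~ z <= x) y.
Proof. by move=> xy; split=> //; split=> [z /(xy z).2 //|m _]; apply; apply/xy. Qed.

Lemma splitting_sup {x y} : splitting x y -> is_sup Lle Lall (fun z => ~ y <= z) x.
Proof.
move=> xy; split=> //; split=> [z nyz|m _]; last by apply=> /(xy x).1; apply.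
by apply: contrapT => /(xy z).2.
Qed.

Lemma splitting_le {x1 y1 x2 y2} : splitting x1 y1 -> splitting x2 y2 ->
  (x1 <= x2) = (y1 <= y2).
Proof.
move=> xy1 xy2; apply/idP/idP => le12.
  by apply/(xy1 y2).2 => y2x1; apply: (xy2 y2).1 (lexx y2) (le_trans y2x1 le12).
by apply: contrapT => /(xy2 x1).2 /(le_trans le12) /(xy1 x1).1; apply.
Qed.

(* Junk value [\bot] when there is no splitting partner. *)
Definition vee x := xget \bot (splitting x).
Definition wedge y := xget \bot (fun x => splitting x y).

Lemma vee_splitting {x} : (exists y, splitting x y) -> splitting x (vee x).
Proof. exact: xgetPex. Qed.

Lemma wedge_splitting {y} : (exists x, splitting x y) -> splitting (wedge y) y.
Proof. exact: xgetPex. Qed.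

Lemma cmi_chain_height {x n} : cmiL x ->
  rank_ge (fun y z : L => cmiL y /\ z < y) x n -> height_ge (fun z => ~ z <= x) n.
Proof.
elim: n x => [//|n IH] x _ [x' [[cmix' xx'] rx']].
exists (fun z => ~ z <= x'); split; last exact: IH.
split; first exact: cmi_prime.
split=> [z nzx' zx|]; first by apply/nzx'/(le_trans zx)/ltW.
by exists x'; split; [rewrite lt_geF|apply].
Qed.

End Irreducibles.

Section CoHeytingDifference.
Context {disp : Order.disp_t} {L : tbDistrLatticeType disp} {sub : L -> L -> L}.
Hypothesis Hsub : is_coHeyting_diff sub.
Implicit Types (a b c m w x y z : L) (p q r : L -> Prop).

Lemma le_join_sub a b : a <= b `|` sub a b. Proof. exact: (Hsub a b).1. Qed.
Lemma sub_least {a b c} : a <= b `|` c -> sub a b <= c. Proof. exact: (Hsub a b).2. Qed.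
Lemma sub_le a b : sub a b <= a. Proof. exact/sub_least/leUr. Qed.

Lemma sub_eq0 {a b} : a <= b -> sub a b = \bot.
Proof. by move=> ab; apply/le_anti; rewrite le0x andbT sub_least // joinx0. Qed.

Lemma le_of_sub_eq0 {a b} : sub a b = \bot -> a <= b.
Proof. by move=> ab0; have := le_join_sub a b; rewrite ab0 joinx0. Qed.

Lemma subxx a : sub a a = \bot. Proof. exact: sub_eq0. Qed.

Lemma sub_triangle a b c : sub a c <= sub a b `|` sub b c.
Proof.
apply/sub_least/(le_trans (le_join_sub a b)).
by rewrite leUx joinCA leUl andbT (le_trans (le_join_sub b c)) ?leUr.
Qed.

Lemma sub_monol {a a' b} : a <= a' -> sub a b <= sub a' b.
Proof. by move=> aa'; apply/sub_least/(le_trans aa')/le_join_sub. Qed.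

Lemma sub_antir {a b b'} : b' <= b -> sub a b <= sub a b'.
Proof. by move=> bb'; apply/sub_least/(le_trans (le_join_sub a b')); rewrite leU2. Qed.

Lemma sub_meetr a b c : sub a (b `&` c) <= sub a b `|` sub a c.
Proof.
apply: sub_least; rewrite joinIl lexI.
rewrite (le_trans (le_join_sub a b)) ?(le_trans (le_join_sub a c)) //.
  by rewrite leU2 ?leUr.
by rewrite leU2 ?leUl.
Qed.

Lemma pf_sub {p a b} : prime_filter p -> p a -> ~ p b -> p (sub a b).
Proof.
by move=> hp pa npb; case: (pf_join hp (pf_up hp (le_join_sub a b) pa)).
Qed.

Lemma pf_congr {p} {I : L -> Prop} {a b} : prime_filter p -> (forall c, I c -> ~ p c) ->
  I (sub a b) -> p a -> p b.
Proof.
move=> hp pI Iab pa.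
by case: (pf_join hp (pf_up hp (le_join_sub a b) pa)) => // /pI.
Qed.

Lemma dL_congrP d a b : congr_mod sub (dL d) a b <-> dL d (sub a b) /\ dL d (sub b a).
Proof.
split=> [Iab|[Iab Iba]]; last exact: dL_join.
by split; apply: dL_down Iab; rewrite ?leUl ?leUr.
Qed.

Hypothesis Hhaus : hausdorff L.
Hypothesis Hpre : precompact sub.

Lemma dL_inter_bot a : (forall d, (0 < d)%N -> dL d a) -> a = \bot.
Proof.
move=> Ia; apply: contrapT => /Hhaus [p [hp [pa [n nhn]]]].
by apply: nhn; case: n => [//|n]; apply: (Ia n.+1).
Qed.

Lemma lb_bot_of_meets_dL {P : L -> Prop} {m} :
  (forall d, (0 < d)%N -> exists c, dL d c /\ P c) -> (forall a, P a -> m <= a) -> m = \bot.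
Proof.
move=> Pd mP; apply: dL_inter_bot => d /Pd [c [Ic Pc]].
exact: dL_down (mP c Pc) Ic.
Qed.

Lemma precompact_reps {d} : (0 < d)%N -> exists n (f : 'I_n -> L),
  forall a, exists i, dL d (sub a (f i)) /\ dL d (sub (f i) a).
Proof.
move=> /Hpre [s reps]; exists (size s), (fun i => nth \bot s i) => a.
have [b bs /dL_congrP Iab] := reps a.
by rewrite -index_mem in bs; exists (Ordinal bs); rewrite /= nth_index // -index_mem.
Qed.

(* Among the prime filters of finite height containing [sub m a], one of minimal height
   cannot contain [a]: otherwise the prime filter theorem yields a strictly smaller one. *)
Lemma separating_prime_filter m a : ~ m <= a ->
  exists r n, prime_filter r /\ r m /\ ~ r a /\ ~ height_ge r n.
Proof.
move=> nma.
have /Hhaus [r0 [hr0 [r0ma nh0]]] : sub m a <> \bot by move/le_of_sub_eq0.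
pose P n := exists r, prime_filter r /\ r (sub m a) /\ ~ height_ge r n.
have [n [[r [hr [rma nhr]]] minn]] : exists n, P n /\ forall k, P k -> (n <= k)%N.
  by apply: ex_minimal_nat; case: nh0 => n nhn; exists n, r0.
exists r, n; split=> //; split; first exact: pf_up hr (sub_le m a) rma.
split=> // ra.
pose J z := exists u, ~ r u /\ z <= a `|` u.
have [r' [hr' [r'm r'J]]] : exists r', prime_filter r' /\ r' m /\ forall z, J z -> ~ r' z.
  apply: prime_filter_separation.
  - by exists \bot; split; [apply: pf_bot hr|apply: le0x].
  - by move=> z z' zz' [u [nru z'u]]; exists u; split => //; apply: le_trans z'u.
  - move=> z z' [u [nru zu]] [u' [nru' z'u']]; exists (u `|` u'); split.
      by case/(pf_join hr).
    by rewrite leUx (le_trans zu) ?(le_trans z'u') // leU2 ?leUl ?leUr.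
  - by move=> [u [nru mau]]; apply/nru; apply: pf_up hr (sub_least mau) rma.
have r'r z : r' z -> r z.
  by move=> r'z; apply: contrapT => nrz; apply: (r'J z) => //; exists z; split=> //; apply: leUr.
have nr'a : ~ r' a by apply: r'J; exists \bot; split; [apply: pf_bot hr|apply: leUl].
case: n nhr minn => [|n] nhr minn; first exact: nhr.
have nh' : ~ height_ge r' n.
  by move=> h'; apply: nhr; exists r'; split=> //; split=> //; split=> //; exists a.
by have := minn n (ex_intro _ r' (conj hr' (conj (pf_sub hr' r'm nr'a) nh'))); rewrite ltnn.
Qed.

(* A prime filter of height [< d] containing the meet would contain all of [q]. *)
Lemma height_eq_meet_reps {q d n} {f : 'I_n -> L} : prime_filter q -> height_eq q d ->
  (forall a, exists i, dL d.+1 (sub a (f i)) /\ dL d.+1 (sub (f i) a)) ->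
  exists T : {set 'I_n}, q (\meet_(i in T) f i) /\ dL d (\meet_(i in T) f i).
Proof.
move=> hq [qd nqd] reps; exists [set i | `[< q (f i) >]].
have qT i : i \in [set i | `[< q (f i) >]] -> q (f i) by rewrite inE => /asboolP.
split; first by apply: big_ind => [|a b|i /qT] //; [apply: pf_top hq|apply: pf_meet hq].
move=> r hr rT; apply: contrapT => nrd.
suff qr z : q z -> r z by apply/nrd/(height_ge_sub qr qd).
move=> qz.
have [i [Izi Iiz]] := reps z.
have qi : q (f i) := pf_congr hq (fun c => pf_dL_disjoint hq nqd) Izi qz.
have ri : r (f i) by apply: pf_up hr _ rT; apply: meets_inf; rewrite inE; apply/asboolP.
exact: pf_congr hr (fun c => pf_dL_disjoint hr nrd) (dL_antitone (leqnSn d) Iiz) ri.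
Qed.

Lemma dL_max d : exists M, dL d M /\ forall w, dL d w -> w <= M.
Proof.
have [n [f reps]] := precompact_reps (ltn0Sn d).
pose meetT (T : {set 'I_n}) := \meet_(i in T) f i.
exists (\join_(T | `[< dL d (meetT T) >]) meetT T); split.
  by apply: big_ind => [|a b|T /asboolP] //; [apply: dL_bot|apply: dL_join].
move=> w Iw; apply: contrapT => /separating_prime_filter [r [k [hr [rw [nrM nrk]]]]].
have [h _ rh] := height_eq_exists nrk.
have dh : (d <= h)%N.
  by rewrite leqNgt; apply/negP => hd; apply: rh.2 (rank_ge_le hd (Iw r hr rw)).
have [q [hq [qr qd]]] := height_eq_descend hr rh dh.
have [T [qT IT]] := height_eq_meet_reps hq qd reps.
by apply/nrM/qr; apply: pf_up hq _ qT; apply: joins_sup; apply/asboolP/IT.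
Qed.

(* With [M] the largest element of [dL d] and [f] representatives modulo [dL d],
   the complement of [q] lies below [x] := (join of the [f i] outside [q]) `|` [M],
   and [q] is generated by [sub y0 x], [y0] the meet of the [f i] inside [q]. *)
Lemma dL_disjoint_splitting {q d} : prime_filter q -> (forall c, dL d c -> ~ q c) ->
  exists x y, splitting x y /\ forall z, q z <-> y <= z.
Proof.
move=> hq qI.
have d0 : (0 < d)%N by case: d qI => [|d] // qI; case: (qI \top) => //; apply: pf_top hq.
have [M [IM maxM]] := dL_max d; have [n [f reps]] := precompact_reps d0.
have qfi z i : dL d (sub z (f i)) -> q z -> q (f i) := @pf_congr q (dL d) z (f i) hq qI.
have qz z i : dL d (sub (f i) z) -> q (f i) -> q z := @pf_congr q (dL d) (f i) z hq qI.
pose x := \join_(i | `[< ~ q (f i) >]) f i `|` M.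
pose y0 := \meet_(i | `[< q (f i) >]) f i.
have nqx : ~ q x.
  case/(pf_join hq) => [|qM]; last exact: qI M IM qM.
  apply: (big_ind (fun c => ~ q c)) => [|a b na nb /(pf_join hq) []|i /asboolP] //.
  exact: pf_bot hq.
have nq_le z : ~ q z -> z <= x.
  move=> nqz; have [i [Izi Iiz]] := reps z; apply: le_trans (le_join_sub z (f i)) _.
  by rewrite leU2 ?maxM //; apply/joins_sup/asboolP => /(qz z i Iiz).
have qy0 : q y0 by apply: big_ind => [|a b|i /asboolP] //; [apply: pf_top hq|apply: pf_meet hq].
have q_ge z : q z -> sub y0 x <= z.
  move=> qz'; have [i [Izi Iiz]] := reps z.
  have y0fi : y0 <= f i by apply: meets_inf; apply/asboolP; apply: qfi Izi qz'.
  apply/sub_least/(le_trans (le_join_sub y0 z)).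
  rewrite joinC leU2 // (le_trans _ (leUr M _)) // maxM //.
  exact: dL_down (sub_monol y0fi) Iiz.
exists x, (sub y0 x); split=> [z|z]; last first.
  by split=> [|yz]; [apply: q_ge|apply: pf_up hq yz (pf_sub hq qy0 nqx)].
split=> [yz zx|nzx]; last by apply/q_ge; apply: contrapT => /nq_le.
by apply/nqx/(pf_up hq zx)/(pf_up hq yz)/(pf_sub hq qy0 nqx).
Qed.

Lemma compl_splitting x : prime_filter (fun z => ~ z <= x) ->
  ~ (forall d, (0 < d)%N -> exists c, dL d c /\ ~ c <= x) -> exists y, splitting x y.
Proof.
move=> hx; rewrite -existsNP => -[d]; rewrite -existsNP => -[_].
rewrite -forallNP => disj.
have [_ [y [_ qy]]] : exists x' y, splitting x' y /\ forall z, ~ z <= x <-> y <= z.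
  by apply: (dL_disjoint_splitting (d := d) hx) => c Ic ncx; apply: (disj c).
by exists y => z; rewrite qy.
Qed.

Lemma cmi_splitting {x} : cmiL x -> exists y, splitting x y.
Proof.
move=> cmix; apply: compl_splitting; first exact: cmi_prime.
move=> meets; case: cmix => _ [_ cmix].
have inf0 : is_inf Lle Lall (fun z => ~ z <= x) \bot.
  split=> //; split=> [z _|m _ lb]; first exact: le0x.
  by rewrite /Lle (lb_bot_of_meets_dL meets lb).
by have [a [nax ax]] := cmix _ _ (fun _ _ => I) inf0 (le0x x).
Qed.

Lemma up_finite_height y : y <> \bot -> exists n, ~ height_ge (fun z => y <= z) n.
Proof.
move=> /Hhaus [r [hr [ry [n nrn]]]]; exists n => h.
by apply/nrn/(height_ge_sub _ h) => z yz; apply: pf_up hr yz ry.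
Qed.

Lemma cji_splitting {y} : cjiL y -> exists x, splitting x y.
Proof.
move=> cjiy; have hy := cji_prime cjiy.
have [n nyn] : exists n, ~ height_ge (fun z => y <= z) n.
  by apply: up_finite_height => y0; case: cjiy => _ [ny _]; apply: ny; rewrite /Lle y0.
have [x [y' [xy' qy']]] := dL_disjoint_splitting hy (fun c => pf_dL_disjoint hy nyn).
by exists x => z; rewrite qy'; apply: xy'.
Qed.

Lemma splitting_separation m a : ~ m <= a ->
  exists x y, splitting x y /\ a <= x /\ y <= m.
Proof.
move=> /separating_prime_filter [r [n [hr [rm [nra nrn]]]]].
have [x [y [xy ry]]] := dL_disjoint_splitting hr (fun c => pf_dL_disjoint hr nrn).
exists x, y; split=> //; split; last exact/ry.
by apply: contrapT => /(xy a).2 /ry.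
Qed.

Lemma cmi_meet_above a : is_inf Lle Lall (fun x => cmiL x /\ a <= x) a.
Proof.
split=> //; split=> [x [] //|m _ lb]; apply: contrapT.
move=> /splitting_separation [x [y [xy [ax ym]]]]; apply: (xy x).1 (lexx x).
exact: le_trans ym (lb x (conj (splitting_cmi xy) ax)).
Qed.

Lemma cmi_cofoundation_finite {x} : cmiL x -> rank_finite (fun y z : L => cmiL y /\ z < y) x.
Proof.
move=> cmix; have [y xy] := cmi_splitting cmix.
have [n nyn] : exists n, ~ height_ge (fun z => y <= z) n.
  by apply: up_finite_height => y0; apply: (xy \bot).1 (le0x x); rewrite y0.
by exists n => /(cmi_chain_height cmix) /(height_ge_sub (fun z => (xy z).2)).
Qed.

Lemma cmi_acc (u : nat -> L) : (forall n, cmiL (u n)) -> (forall n, u n <= u n.+1) ->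
  exists N, forall n, (N <= n)%N -> u n = u N.
Proof.
move=> cmiu incr; apply: contrapT => nstable.
have mono N n : (N <= n)%N -> u N <= u n.
  by move/subnKC <-; elim: (n - N)%N => [|i IH]; rewrite ?addn0 ?addnS // (le_trans IH).
have [k] := cmi_cofoundation_finite (cmiu 0); apply; apply: rank_ge_chain => N.
apply: contrapT => Nmax; apply: nstable; exists N => n Nn.
apply/le_anti; rewrite (mono N n Nn) andbT; apply: contrapT => /negP nle.
by apply: Nmax; exists n; split=> //; rewrite lt_leAnge (mono N n Nn) nle.
Qed.

Notation hle := (hat_le sub).
Notation helem := (hat_elem sub).

Lemma hat_leP (x y : nat -> L) : hle x y <-> forall d, (0 < d)%N -> dL d (sub (x d) (y d)).
Proof.
have meet_sub a b : sub a (a `&` b) <= sub a b.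
  by apply: sub_least; rewrite joinIl lexI leUl le_join_sub.
split=> xy d d0; have := xy d d0; rewrite dL_congrP.
  by case=> _ /(dL_down (sub_antir (leIr _ _))).
by move=> Ixy; split; [rewrite sub_eq0 ?leIl //; apply: dL_bot|apply: dL_down (meet_sub _ _) Ixy].
Qed.

Lemma hat_elem_congr {x : nat -> L} {e d : nat} : helem x -> (0 < e)%N -> (e <= d)%N ->
  dL e (sub (x d) (x e)) /\ dL e (sub (x e) (x d)).
Proof.
move=> hx e0; elim: d => [|d IH]; first by rewrite leqNgt e0.
rewrite leq_eqVlt ltnS => /orP [/eqP <-|ed]; first by rewrite subxx; split; apply: dL_bot.
have [Ide Ied] := IH ed; have /dL_congrP [Ids Isd] := hx d (leq_trans e0 ed).
split; apply: dL_down (sub_triangle _ (x d) _) _; apply: dL_join => //.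
  exact: dL_antitone ed Ids.
exact: dL_antitone ed Isd.
Qed.

Lemma hat_of_le z w : hle (hat_of z) (hat_of w) <-> z <= w.
Proof.
rewrite hat_leP; split=> [zw|zw d _]; last by rewrite sub_eq0 //; apply: dL_bot.
by apply/le_of_sub_eq0/dL_inter_bot.
Qed.

Lemma hat_elem_of z : helem (hat_of z).
Proof. by move=> d _; apply/dL_congrP; rewrite /hat_of subxx; split; apply: dL_bot. Qed.

Lemma hat_le_refl (x : nat -> L) : hle x x.
Proof. by apply/hat_leP => d _; rewrite subxx; apply: dL_bot. Qed.

Lemma hat_le_trans {x y z : nat -> L} : hle x y -> hle y z -> hle x z.
Proof.
move=> /hat_leP xy /hat_leP yz; apply/hat_leP => d d0.
by apply: dL_down (sub_triangle _ (y d) _) _; apply: dL_join; [apply: xy|apply: yz].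
Qed.

Lemma hat_ge_of_not_le a y (al : nat -> L) : splitting a y -> helem al ->
  ~ hle al (hat_of a) -> hle (hat_of y) al.
Proof.
move=> ay hal nala; apply/hat_leP => d d0.
have [d1 [d10 nId1]] : exists d1, (0 < d1)%N /\ ~ dL d1 (sub (al d1) a).
  apply: contrapT => Id; apply/nala/hat_leP => d1 d10.
  by apply: contrapT => nId1; apply: Id; exists d1.
pose e := maxn d d1.
have [_ Id1e] := hat_elem_congr hal d10 (leq_maxr d d1).
have [Ied _] := hat_elem_congr hal d0 (leq_maxl d d1).
have yal : y <= al e.
  apply/(ay _).2 => ala; apply: nId1; apply: dL_down (sub_triangle _ (al e) _) _.
  by rewrite (sub_eq0 ala) joinx0.
by apply: dL_down (sub_triangle _ (al e) _) _; rewrite /hat_of (sub_eq0 yal) join0x.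
Qed.

Lemma cmi_hat_of a : cmiL a -> cmi_hat sub (hat_of a).
Proof.
move=> cmia; have [y ay] := cmi_splitting cmia.
split; first exact: hat_elem_of.
split; first by move/(hat_of_le \top a); apply: (ay \top).1 (lex1 y).
move=> A m HA [_ [_ glb]] ma; apply: contrapT => nAa.
have yA al : A al -> hle (hat_of y) al.
  by move=> Aal; apply: hat_ge_of_not_le (HA _ Aal) _ => // ala; apply: nAa; exists al.
apply: (ay a).1 (lexx a); apply/hat_of_le.
exact: hat_le_trans (glb _ (hat_elem_of y) yA) ma.
Qed.

Definition hat_image (P : L -> Prop) (al : nat -> L) := exists z, P z /\ al = hat_of z.

Lemma cmi_hat_image_inf {a} {P : L -> Prop} {m} : cmi_hat sub (hat_of a) ->
  is_inf hle helem (hat_image P) (hat_of m) -> m <= a -> exists z, P z /\ z <= a.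
Proof.
case=> _ [_ cmia] inf ma.
have imP al : hat_image P al -> helem al by case=> z [_ ->]; apply: hat_elem_of.
have [_ [[z [Pz ->]] /hat_of_le za]] := cmia _ _ imP inf (proj2 (hat_of_le _ _) ma).
by exists z.
Qed.

Lemma cmi_of_cmi_hat a : cmi_hat sub (hat_of a) -> cmiL a.
Proof.
move=> cmia; have ntop : ~ \top <= a by move/(hat_of_le \top a); case: cmia => _ [].
have prime : prime_filter (fun z => ~ z <= a).
  apply: prime_filter_notle => // z w zwa.
  have inf : is_inf hle helem (hat_image (fun c => c = z \/ c = w)) (hat_of (z `&` w)).
    split; first exact: hat_elem_of.
    split=> [_ [c [zw ->]]|m' _ lb]; first by apply/hat_of_le; case: zw => ->; rewrite ?leIl ?leIr.
    have /hat_leP mz := lb _ (ex_intro _ z (conj (or_introl erefl) erefl)).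
    have /hat_leP mw := lb _ (ex_intro _ w (conj (or_intror erefl) erefl)).
    by apply/hat_leP => d d0; apply: dL_down (sub_meetr _ _ _) (dL_join (mz d d0) (mw d d0)).
  by have [c [[->|->] ca]] := cmi_hat_image_inf cmia inf zwa; [left|right].
suff [y ay] : exists y, splitting a y by apply: splitting_cmi ay.
apply: compl_splitting prime _ => meets.
have inf : is_inf hle helem (hat_image (fun c => ~ c <= a)) (hat_of \bot).
  split; first exact: hat_elem_of.
  split=> [_ [c [_ ->]]|m' _ lb]; first by apply/hat_of_le/le0x.
  apply/hat_leP => d d0; have [c [Ic nca]] := meets d d0.
  have /hat_leP /(_ d d0) Imc := lb _ (ex_intro _ c (conj nca erefl)).
  apply: dL_down (sub_le _ _) _; apply: dL_down (le_join_sub _ c) (dL_join Ic Imc).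
by have [c [nca ca]] := cmi_hat_image_inf cmia inf (le0x a).
Qed.

Lemma hat_le_hat_of_join {x : nat -> L} {d M} : helem x -> (0 < d)%N ->
  (forall w, dL d w -> w <= M) -> hle x (hat_of (x d `|` M)).
Proof.
move=> hx d0 maxM; apply/hat_leP => e e0; rewrite /hat_of.
case: (leqP e d) => [ed|de].
  have [_ Ied] := hat_elem_congr hx e0 ed.
  by apply: dL_down Ied; apply/sub_antir/leUl.
have [Ied _] := hat_elem_congr hx d0 (ltnW de).
rewrite sub_eq0; first exact: dL_bot.
by apply: le_trans (le_join_sub (x e) (x d)) _; rewrite leU2 ?maxM.
Qed.

Lemma hat_inf_image_above {x : nat -> L} : helem x ->
  is_inf hle helem (hat_image (fun z => hle x (hat_of z))) x.
Proof.
move=> hx; split=> //; split=> [_ [z [xz ->]] //|m _ lb].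
apply/hat_leP => d d0; have [M [IM maxM]] := dL_max d.
have /hat_leP /(_ d d0) Imz := lb _ (ex_intro _ _ (conj (hat_le_hat_of_join hx d0 maxM) erefl)).
apply: dL_down (sub_triangle _ (x d `|` M) _) (dL_join Imz _).
exact: dL_down (sub_least (lexx _)) IM.
Qed.

Lemma cmi_hat_in_image (x : nat -> L) : cmi_hat sub x -> exists a, hat_eq sub x (hat_of a).
Proof.
move=> [hx [_ cmi]].
have imP al : hat_image (fun z => hle x (hat_of z)) al -> helem al.
  by case=> z [_ ->]; apply: hat_elem_of.
have [_ [[a [xa ->]] ax]] := cmi _ _ imP (hat_inf_image_above hx) (hat_le_refl x).
by exists a.
Qed.

Lemma cmi_vee {x} : cmiL x -> splitting x (vee x).
Proof. by move=> /cmi_splitting /vee_splitting. Qed.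

Lemma cji_wedge {y} : cjiL y -> splitting (wedge y) y.
Proof. by move=> /cji_splitting /wedge_splitting. Qed.

End CoHeytingDifference.

Theorem proposition6p7 (disp : Order.disp_t) (L : tbDistrLatticeType disp)
  (sub : L -> L -> L) (Hsub : is_coHeyting_diff sub)
  (Hhaus : hausdorff L) (Hpre : precompact sub) :
  ((forall a : L, cmiL a <-> cmi_hat sub (hat_of a)) /\
   (forall x : nat -> L, cmi_hat sub x -> exists a : L, hat_eq sub x (hat_of a))) /\
  (exists vee wedge : L -> L,
     (forall x, cmiL x -> is_inf Lle Lall (fun y => ~ (y <= x)) (vee x)) /\
     (forall y, cjiL y -> is_sup Lle Lall (fun z => ~ (y <= z)) (wedge y)) /\
     (forall x, cmiL x -> cjiL (vee x)) /\
     (forall y, cjiL y -> cmiL (wedge y)) /\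
     (forall x, cmiL x -> wedge (vee x) = x) /\
     (forall y, cjiL y -> vee (wedge y) = y) /\
     (forall x1 x2, cmiL x1 -> cmiL x2 -> x1 <= x2 -> vee x1 <= vee x2) /\
     (forall y1 y2, cjiL y1 -> cjiL y2 -> y1 <= y2 -> wedge y1 <= wedge y2)) /\
  (forall x, cmiL x -> rank_finite (fun y z : L => cmiL y /\ z < y) x) /\
  (forall u : nat -> L, (forall n, cmiL (u n)) -> (forall n, u n <= u n.+1) ->
     exists N, forall n, (N <= n)%N -> u n = u N) /\
  (forall a : L, is_inf Lle Lall (fun x => cmiL x /\ a <= x) a).
Proof.
have vee_spec (x : L) : cmiL x -> splitting x (vee x) := cmi_vee Hsub Hhaus Hpre.
have wedge_spec (y : L) : cjiL y -> splitting (wedge y) y := cji_wedge Hsub Hhaus Hpre.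
split; first split.
- by move=> a; split; [apply: cmi_hat_of|apply: cmi_of_cmi_hat].
- exact: cmi_hat_in_image Hsub Hhaus Hpre.
split.
  exists vee, wedge.
  split; first by move=> x /vee_spec /splitting_inf.
  split; first by move=> y /wedge_spec /splitting_sup.
  split; first by move=> x /vee_spec /splitting_cji.
  split; first by move=> y /wedge_spec /splitting_cmi.
  split.
    by move=> x /vee_spec xy; exact: splitting_uniql (wedge_spec _ (splitting_cji xy)) xy.
  split.
    by move=> y /wedge_spec xy; exact: splitting_uniqr (vee_spec _ (splitting_cmi xy)) xy.
  split; first by move=> x1 x2 /vee_spec xy1 /vee_spec xy2; rewrite (splitting_le xy1 xy2).
  by move=> y1 y2 /wedge_spec xy1 /wedge_spec xy2; rewrite (splitting_le xy1 xy2).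
split; first by move=> x /(cmi_cofoundation_finite Hsub Hhaus Hpre).
split; first exact: cmi_acc Hsub Hhaus Hpre.
exact: cmi_meet_above Hsub Hhaus Hpre.
Qed.
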